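(* Let $f:\mathbb{R}^n\to\mathbb{R}$ be differentiable, $L$-smooth and $m$-strongly convex with $m>0$, and let $x_*$ be the unique point with $\nabla f(x_* )=0$. Let $0<\mu<2$, $\delta>0$, $\alpha>0$, $\eta>0$ and constants $0<c_1\le c_2<+\infty$. Consider the AFOAGD iteration $$x_{k+1}=y_k-\alpha\,\nabla f(y_k)\,\beta_k\,(\|y_k-y_{k-1}\|_2+\delta)^{1-\mu},\qquad y_k=x_k+\eta(x_k-x_{k-1}),$$ where the scalars $\beta_k>0$ satisfy $0<c_1\le \beta_k(\|y_k-y_{k-1}\|_2+\delta)^{1-\mu}\le c_2<+\infty$ for all $k$. Set $u_k=\nabla f(y_k)\,\beta_k(\|y_k-y_{k-1}\|_2+\delta)^{1-\mu}$, $u_*=0$, and $e_k=[(x_{k-1}-x_* )^\top,(x_k-x_* )^\top,(u_k-u_* )^\top]^\top\in\mathbb{R}^{3n}$. Let $\psi:\mathbb{R}\to\mathbb{R}$ be given by $\psi(s)=1$ if $s\ge 0$ and $\psi(s)=0$ otherwise, and write $\psi_k=\psi\big(\nabla f(y_k)^\top(y_k-x_k)\big)$. Then for all trajectories and all $k$, $$f(x_{k+1})-f(x_k)\le e_k^\top N^2 e_k,$$ where $$N^2=\psi_k\begin{bmatrix}-\frac{\eta^2 m}{2}I_n & \frac{\eta^2 m}{2}I_n & -\frac{\eta}{2c_1}I_n\\ \frac{\eta^2 m}{2}I_n & -\frac{\eta^2 m}{2}I_n & \frac{\eta}{2c_1}I_n\\ -\frac{\eta}{2c_1}I_n & \frac{\eta}{2c_1}I_n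 & \left(\frac12\alpha^2L-\frac{\alpha}{c_2}\right)I_n\end{bmatrix}+(1-\psi_k)\begin{bmatrix}-\frac{\eta^2 m}{2}I_n & \frac{\eta^2 m}{2}I_n & -\frac{\eta}{2c_2}I_n\\ \frac{\eta^2 m}{2}I_n & -\frac{\eta^2 m}{2}I_n & \frac{\eta}{2c_2}I_n\\ -\frac{\eta}{2c_2}I_n & \frac{\eta}{2c_2}I_n & \left(\frac12\alpha^2L-\frac{\alpha}{c_2}\right)I_n\end{bmatrix}.$$
   Context: A differentiable $f$ is $L$-smooth if $\|\nabla f(x)-\nabla f(y)\|_2\le L\|x-y\|_2$ for all $x,y$, and $m$-strongly convex if $m\|x-y\|_2^2\le (x-y)^\top(\nabla f(x)-\nabla f(y))$ for all $x,y$. $I_n$ is the $n\times n$ identity matrix. *)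

From HB Require Import structures.
From mathcomp Require Import all_boot all_order all_algebra.
From mathcomp Require Import all_classical all_reals all_analysis.
Set Implicit Arguments. Unset Strict Implicit. Unset Printing Implicit Defensive.
Import Order.TTheory GRing.Theory Num.Theory.
Import numFieldNormedType.Exports.
Local Open Scope ring_scope.

Section Defs.
Context {R : realType} {n : nat}.

Definition dotv (u v : 'cV[R]_n) : R := (u^T *m v) 0 0.
Definition norm2 (v : 'cV[R]_n) : R := Num.sqrt (dotv v v).

Definition grad (f : 'cV[R]_n -> R) (x : 'cV[R]_n) : 'cV[R]_n :=
  \col_i ('d f x (delta_mx i 0 : 'cV[R]_n)).

Definition L_smooth (f : 'cV[R]_n -> R) (L : R) : Prop :=
  forall x y, norm2 (grad f x - grad f y) <= L * norm2 (x - y).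

Definition strongly_convex (f : 'cV[R]_n -> R) (m : R) : Prop :=
  forall x y, m * norm2 (x - y) ^+ 2 <= dotv (x - y) (grad f x - grad f y).

(* 3x3 block matrix with scalar multiples of I_n as blocks *)
Definition blk3 (a b c d e f g h i : R) : 'M[R]_(n + (n + n)) :=
  block_mx a%:M (row_mx b%:M c%:M) (col_mx d%:M g%:M)
           (block_mx e%:M f%:M h%:M i%:M).

Definition quadf (M : 'M[R]_(n + (n + n))) (e : 'cV[R]_(n + (n + n))) : R :=
  (e^T *m M *m e) 0 0.

Definition stack3 (a b c : 'cV[R]_n) : 'cV[R]_(n + (n + n)) :=
  col_mx a (col_mx b c).

End Defs.

Definition psi {R : realType} (s : R) : R := if 0 <= s then 1 else 0.

(* Expand both f(x_{k+1}) and f(x_k) to first order around the extrapolated point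
   y_k, with g = grad f(y_k) and u_k = s_k g, s_k in [c1, c2]: L-smoothness bounds
   the first expansion from above and strong convexity the second from below (both
   via the mean value theorem along a segment), so that
     f(x_{k+1}) - f(x_k) <= -alpha s_k |g|^2 + L alpha^2 |u_k|^2 / 2
                            + <g, y_k - x_k> - m |x_k - y_k|^2 / 2.
   Since s_k <= c2 the gradient terms are at most (alpha^2 L / 2 - alpha / c2) |u_k|^2,
   and since y_k - x_k = eta (x_k - x_{k-1}), the cross term <g, y_k - x_k> is at most
   (s_k / c) <g, y_k - x_k> = (eta / c) <x_k - x_{k-1}, u_k>, where c = c1 if it is
   nonnegative and c = c2 otherwise: this is the choice made by psi_k. *)

From HB Require Import structures.
From mathcomp Require Import all_boot all_order all_algebra.
From mathcomp Require Import all_classical all_reals all_analysis.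
From mathcomp Require Import ring lra.
Import Order.TTheory GRing.Theory Num.Theory.
Import numFieldNormedType.Exports.
Local Open Scope ring_scope.
Local Open Scope classical_set_scope.

Section InnerProduct.
Context {R : realType} {n : nat}.
Implicit Types u v w : 'cV[R]_n.

Lemma dotvE u v : dotv u v = \sum_i u i 0 * v i 0.
Proof. by rewrite /dotv mxE; apply: eq_bigr => i _; rewrite mxE. Qed.

Lemma dotvC u v : dotv u v = dotv v u.
Proof. by rewrite !dotvE; apply: eq_bigr => i _; rewrite mulrC. Qed.

Lemma dotvDl u v w : dotv (u + v) w = dotv u w + dotv v w.
Proof. by rewrite !dotvE -big_split; apply: eq_bigr => i _; rewrite !mxE mulrDl. Qed.

Lemma dotvZl a u w : dotv (a *: u) w = a * dotv u w.
Proof. by rewrite !dotvE mulr_sumr; apply: eq_bigr => i _; rewrite !mxE mulrA. Qed.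

Lemma dotvNl u w : dotv (- u) w = - dotv u w.
Proof. by rewrite -scaleN1r dotvZl mulN1r. Qed.

Lemma dotvBl u v w : dotv (u - v) w = dotv u w - dotv v w.
Proof. by rewrite dotvDl dotvNl. Qed.

Lemma dotv0l w : dotv 0 w = 0.
Proof. by rewrite -(scale0r 0) dotvZl mul0r. Qed.

Lemma dotvZr a u w : dotv w (a *: u) = a * dotv w u.
Proof. by rewrite dotvC dotvZl dotvC. Qed.

Lemma dotvNr u w : dotv w (- u) = - dotv w u.
Proof. by rewrite dotvC dotvNl dotvC. Qed.

Lemma dotvBr u v w : dotv w (u - v) = dotv w u - dotv w v.
Proof. by rewrite dotvC dotvBl !(dotvC w). Qed.

Lemma dotv0r w : dotv w 0 = 0.
Proof. by rewrite dotvC dotv0l. Qed.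

Lemma dotvvE u : dotv u u = \sum_i u i 0 ^+ 2.
Proof. by rewrite dotvE; apply: eq_bigr => i _; rewrite expr2. Qed.

Lemma dotvv_ge0 u : 0 <= dotv u u.
Proof. by rewrite dotvvE sumr_ge0 // => i _; rewrite sqr_ge0. Qed.

Lemma dotvv_eq0 u : (dotv u u == 0) = (u == 0).
Proof.
rewrite dotvvE psumr_eq0 => [|i _]; last exact: sqr_ge0.
apply/allP/eqP => [u0|u0 i _]; last by rewrite u0 mxE expr0n eqxx.
apply/matrixP => i j; rewrite (ord1 j) mxE.
by apply/eqP; rewrite -sqrf_eq0; apply: u0; rewrite mem_index_enum.
Qed.

Lemma norm2_ge0 u : 0 <= norm2 u.
Proof. exact: sqrtr_ge0. Qed.

Lemma norm2_sqr u : norm2 u ^+ 2 = dotv u u.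
Proof. by rewrite sqr_sqrtr // dotvv_ge0. Qed.

Lemma norm2_eq0 u : (norm2 u == 0) = (u == 0).
Proof. by rewrite -sqrf_eq0 norm2_sqr dotvv_eq0. Qed.

Lemma norm2Z a u : norm2 (a *: u) = `|a| * norm2 u.
Proof. by rewrite /norm2 dotvZl dotvZr mulrA -expr2 sqrtrM ?sqr_ge0 // sqrtr_sqr. Qed.

Lemma dotv_le_norm2 u v : dotv u v <= norm2 u * norm2 v.
Proof.
have [/eqP|u_neq0] := eqVneq (norm2 u) 0.
  by rewrite norm2_eq0 => /eqP->; rewrite dotv0l mulr_ge0 ?norm2_ge0.
have [/eqP|v_neq0] := eqVneq (norm2 v) 0.
  by rewrite norm2_eq0 => /eqP->; rewrite dotv0r mulr_ge0 ?norm2_ge0.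
set A := norm2 u; set B := norm2 v.
have AB_gt0 : 0 < A * B by rewrite mulr_gt0 // lt0r ?u_neq0 ?v_neq0 norm2_ge0.
(* expanding [0 <= |B u - A v|^2] gives [0 <= 2 A B (A B - u.v)] *)
have := dotvv_ge0 (B *: u - A *: v).
rewrite !(dotvBl, dotvBr, dotvZl, dotvZr) -!norm2_sqr -/A -/B (dotvC v u) => expand_ge0.
have : 0 <= 2 * (A * B) * (A * B - dotv u v) by lra.
by rewrite pmulr_rge0 ?subr_ge0 // mulr_gt0.
Qed.

End InnerProduct.

Section LineDerivative.
Context {R : realType} {n : nat}.
Implicit Types (f : 'cV[R]_n -> R) (x v : 'cV[R]_n).

Lemma diff_dotv_grad f x v : 'd f x v = dotv (grad f x) v.
Proof.
have delta_sum (w : 'cV[R]_n) : w = \sum_i w i 0 *: delta_mx i 0.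
  apply/matrixP => i j; rewrite (ord1 j) summxE (bigD1 i) //= big1 => [|k /negbTE ki].
    by rewrite !mxE !eqxx mulr1 addr0.
  by rewrite !mxE eq_sym ki mulr0.
rewrite {1}[v]delta_sum linear_sum dotvE; apply: eq_bigr => i _.
by rewrite linearZ /= mulrC /grad mxE.
Qed.

Lemma is_derive_line f x v (t : R) : differentiable f (x + t *: v) ->
  is_derive t 1 (fun s : R => f (x + s *: v)) (dotv (grad f (x + t *: v)) v).
Proof.
move=> df.
have -> : (fun s : R => f (x + s *: v)) = f \o (cst x + *:%R ^~ v) by [].
have line_diff : is_diff t (cst x + *:%R ^~ v) (0 + *:%R ^~ v) by exact: is_diffD.
have comp_diff := is_diff_comp line_diff (differentiableP df).
apply: DeriveDef; first exact/diff_derivable/ex_diff.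
by rewrite deriveE // diff_val /= add0r scale1r diff_dotv_grad.
Qed.

End LineDerivative.

Lemma taylor1_remainder_le {R : realType} (phi dphi : R -> R) (K : R) :
  (forall t : R, is_derive t 1 phi (dphi t)) ->
  (forall t, 0 < t < 1 -> dphi t - dphi 0 <= K * t) ->
  phi 1 - phi 0 - dphi 0 <= K / 2.
Proof.
move=> dphiE dphi_le.
pose h t := phi t - (dphi 0 * t + K / 2 * t ^+ 2).
have dh (t : R) : is_derive t 1 h (dphi t - (dphi 0 + K * t)).
  apply: is_derive_eq.
  rewrite !scaler1 -mulr2n; congr (_ - (_ + _)).
  by change (K / 2 * (t *+ 2) = K * t); rewrite -mulr_natr; field.
have h_cont : {within `[0, 1], continuous h}.
  by apply: derivable_within_continuous => t _; exact: (ex_derive (is_derive := dh t)).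
have [c c01 MVT_h] := MVT ltr01 (fun t _ => dh t) h_cont.
move: c01; rewrite in_itv /= => /dphi_le.
move: MVT_h; rewrite /h !(subr0, mulr0, mulr1, addr0, expr0n, expr1n) /=.
lra.
Qed.

Section FirstOrderBounds.
Context {R : realType} {n : nat} {f : 'cV[R]_n -> R}.
Hypothesis f_diff : forall z, differentiable f z.
Implicit Types (x v : 'cV[R]_n).

Lemma L_smooth_upper_bound {L : R} : L_smooth f L -> forall x v,
  f (x + v) - f x - dotv (grad f x) v <= L / 2 * dotv v v.
Proof.
move=> f_smooth x v.
have := @taylor1_remainder_le R (fun t => f (x + t *: v))
  (fun t => dotv (grad f (x + t *: v)) v) (L * dotv v v).
rewrite scale1r scale0r addr0 mulrAC.
apply=> [t|t /andP[t_gt0 _]]; first exact: is_derive_line.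
rewrite -dotvBl; apply: le_trans (dotv_le_norm2 _ _) _.
have shift : x + t *: v - x = t *: v by rewrite addrC addKr.
have := f_smooth (x + t *: v) x; rewrite shift norm2Z gtr0_norm //.
move=> /(ler_wpM2r (norm2_ge0 v)) /le_trans; apply.
by rewrite -norm2_sqr; lra.
Qed.

Lemma strongly_convex_lower_bound {m : R} : strongly_convex f m -> forall x v,
  m / 2 * dotv v v <= f (x + v) - f x - dotv (grad f x) v.
Proof.
move=> f_sconv x v.
suff : - f (x + 1 *: v) - - f (x + 0 *: v) - - dotv (grad f (x + 0 *: v)) v
       <= - (m * dotv v v) / 2 by rewrite scale1r scale0r addr0; lra.
apply: (@taylor1_remainder_le R (fun t => - f (x + t *: v))
  (fun t => - dotv (grad f (x + t *: v)) v)) => [t|t /andP[t_gt0 _]].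
  exact/is_deriveN/is_derive_line.
have shift : x + t *: v - x = t *: v by rewrite addrC addKr.
have := f_sconv (x + t *: v) x.
rewrite shift norm2Z gtr0_norm // exprMn norm2_sqr dotvZl [dotv v (_ - _)]dotvC dotvBl.
rewrite scale0r addr0 => sconv_t.
rewrite opprK addrC -opprB mulNr lerN2 -(ler_pM2l t_gt0).
by rewrite mulrCA -expr2 -mulrA [dotv v v * _]mulrC.
Qed.

End FirstOrderBounds.

Section BlockQuadraticForm.
Context {R : realType} {n : nat}.
Implicit Types (M N : 'M[R]_(n + (n + n))) (e : 'cV[R]_(n + (n + n))).

Lemma quadfD M N e : quadf (M + N) e = quadf M e + quadf N e.
Proof. by rewrite /quadf mulmxDr mulmxDl mxE. Qed.

Lemma quadfZ k M e : quadf (k *: M) e = k * quadf M e.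
Proof. by rewrite /quadf -scalemxAr -scalemxAl mxE. Qed.

Lemma quadf_blk3 (A B C D E F G H I : R) (a b c : 'cV[R]_n) :
  quadf (blk3 A B C D E F G H I) (stack3 a b c) =
    A * dotv a a + B * dotv a b + C * dotv a c
  + D * dotv b a + E * dotv b b + F * dotv b c
  + G * dotv c a + H * dotv c b + I * dotv c c.
Proof.
have entryD (M N : 'M[R]_1) : (M + N) 0 0 = M 0 0 + N 0 0 by rewrite mxE.
have entryZ k (M : 'M[R]_1) : (k *: M) 0 0 = k * M 0 0 by rewrite mxE.
rewrite /quadf /blk3 /stack3 !tr_col_mx.
rewrite !(mul_row_block, mul_row_col, mul_mx_row, mul_mx_scalar, mulmxDl).
by rewrite -!scalemxAl !(entryD, entryZ) /dotv; ring.
Qed.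

Lemma quadf_blk3_diff (a c q : R) (a1 a2 a3 : 'cV[R]_n) :
  quadf (blk3 (- a) a (- c) a (- a) c (- c) c q) (stack3 a1 a2 a3) =
  - a * dotv (a2 - a1) (a2 - a1) + 2 * c * dotv (a2 - a1) a3 + q * dotv a3 a3.
Proof.
rewrite quadf_blk3 !(dotvBl, dotvBr) (dotvC a2 a1) (dotvC a3 a1) (dotvC a3 a2).
ring.
Qed.

End BlockQuadraticForm.

Lemma gradient_step_le {R : realFieldType} (L : R) {alpha s c G : R} :
  0 < alpha -> 0 < s <= c -> 0 <= G ->
  - (alpha * (s * G)) + L / 2 * (alpha ^+ 2 * (s ^+ 2 * G))
    <= (alpha ^+ 2 * L / 2 - alpha / c) * (s ^+ 2 * G).
Proof.
move=> alpha_gt0 /andP[s_gt0 s_le_c] G_ge0.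
have c_gt0 : 0 < c by apply: lt_le_trans s_le_c.
rewrite -subr_ge0 (_ : _ - _ = alpha * s * G * ((c - s) / c)).
  by rewrite !mulr_ge0 ?subr_ge0 ?invr_ge0 // ltW.
by field; rewrite gt_eqF.
Qed.

Lemma le_psi_interpolation {R : realType} (T : R) {c1 c2 s : R} :
  0 < c1 -> c1 <= s <= c2 ->
  T <= psi T * (s / c1 * T) + (1 - psi T) * (s / c2 * T).
Proof.
move=> c1_gt0 /andP[c1_le_s s_le_c2].
have c2_gt0 := lt_le_trans c1_gt0 (le_trans c1_le_s s_le_c2).
rewrite /psi; case: ifPn => [T_ge0|]; rewrite ?subrr ?subr0 ?mul0r ?mul1r ?addr0 ?add0r.
  by rewrite ler_peMl // ler_pdivlMr // mul1r.
by rewrite -ltNge => /ltW T_le0; rewrite ler_niMl // ler_pdivrMr // mul1r.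
Qed.

Theorem lemma2 (R : realType) (n : nat) (f : 'cV[R]_n -> R) (L m : R)
  (xs : 'cV[R]_n) (mu delta alpha eta c1 c2 : R)
  (x : int -> 'cV[R]_n) (beta : int -> R) :
  (forall z, differentiable f z) ->
  L_smooth f L -> strongly_convex f m -> 0 < m ->
  grad f xs = 0 ->
  0 < mu < 2 -> 0 < delta -> 0 < alpha -> 0 < eta ->
  0 < c1 -> c1 <= c2 ->
  let y := fun k : int => x k + eta *: (x k - x (k - 1)) in
  let s := fun k : int => beta k * (norm2 (y k - y (k - 1)) + delta) `^ (1 - mu) in
  (forall k, 0 < beta k) ->
  (forall k, c1 <= s k <= c2) ->
  (forall k, x (k + 1) = y k - alpha *: (s k *: grad f (y k))) ->
  forall k : int,
    let u := s k *: grad f (y k) in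
    let e := stack3 (x (k - 1) - xs) (x k - xs) (u - 0) in
    let p := psi (dotv (grad f (y k)) (y k - x k)) in
    let a := eta ^+ 2 * m / 2 in
    let q := alpha ^+ 2 * L / 2 - alpha / c2 in
    let N2 := p *: blk3 (- a) a (- (eta / (2 * c1)))
                         a (- a) (eta / (2 * c1))
                         (- (eta / (2 * c1))) (eta / (2 * c1)) q
            + (1 - p) *: blk3 (- a) a (- (eta / (2 * c2)))
                         a (- a) (eta / (2 * c2))
                         (- (eta / (2 * c2))) (eta / (2 * c2)) q in
    f (x (k + 1)) - f (x k) <= quadf N2 e.
Proof.
(* Of the step size only the bounds c1 <= s k <= c2 matter, and xs cancels in e. *)
move=> f_diff f_smooth f_sconv _ _ _ _ alpha_gt0 eta_gt0 c1_gt0 c1_le_c2 y s _ s_bounds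
  x_next k; cbv zeta.
have s_pos : 0 < s k <= c2 by have /andP[/(lt_le_trans c1_gt0) -> ->] := s_bounds k.
set g := grad f (y k); set d := x k - x (k - 1); set T := dotv g (y k - x k).
have yxE : y k - x k = eta *: d by rewrite /y addrAC subrr add0r.
have xyE : x k - y k = - (eta *: d) by rewrite -yxE opprB.
have TE : T = eta * dotv g d by rewrite /T yxE dotvZr.
rewrite [quadf _ _](_ : _ = - (eta ^+ 2 * m / 2) * dotv d d
    + (alpha ^+ 2 * L / 2 - alpha / c2) * (s k ^+ 2 * dotv g g)
    + (psi T * (s k / c1 * T) + (1 - psi T) * (s k / c2 * T))); last first.
  rewrite quadfD !quadfZ !quadf_blk3_diff opprB addrA subrK subr0.
  rewrite TE !(dotvZl, dotvZr) (dotvC d g).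
  by field; rewrite !gt_eqF // (lt_le_trans c1_gt0).
have := L_smooth_upper_bound f_diff f_smooth (y k) (- (alpha *: (s k *: g))).
have := strongly_convex_lower_bound f_diff f_sconv (y k) (x k - y k).
rewrite subrKC -x_next xyE !(dotvNl, dotvNr, dotvZl, dotvZr, mulrN, opprK) -/g -TE.
have := gradient_step_le L alpha_gt0 s_pos (dotvv_ge0 g).
have := le_psi_interpolation T c1_gt0 (s_bounds k).
lra.
Qed.
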